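(* Let $S\subset\mathbb Z_{\ge1}$. Then $\langle S\rangle_{\mathcal C}$ is the set of all integers of the form $$k+\sum_{j=1}^r(\overline\beta_{b_j}-\overline\beta_{a_j})+s$$ where $r\ge0$, $s\in\mathcal S_\Gamma\cup\{0\}$, $k\in S$, $a_j,b_j\in\{1,\dots,g\}$ and $k\le\overline\beta_{a_1}<\overline\beta_{b_1}\le\overline\beta_{a_2}<\overline\beta_{b_2}\le\cdots\le\overline\beta_{a_r}<\overline\beta_{b_r}$.
   Context: Let $\Gamma$ be a singular irreducible plane branch with multiplicity $n$, Puiseux characteristic exponents $\beta_1<\dots<\beta_g$, $e_0=n$, $e_j=\gcd(e_{j-1},\beta_j)$, $n_j=e_{j-1}/e_j$, $\overline\beta_1=\beta_1$, $\overline\beta_j=n_{j-1}\overline\beta_{j-1}-\beta_{j-1}+\beta_j$ ($2\le j\le g$), and semigroup $\mathcal S_\Gamma$ generated by $n,\overline\beta_1,\dots,\overline\beta_g$. A subset $S\subset\mathbb Z_{>0}$ is a $\mathcal C$-collection if $S+\mathcal S_\Gamma\subset S$ and for all $m\in S$ and $1\le j\le k\le g$ with $m\le\overline\beta_j$, $m+\overline\beta_k-\overline\beta_j\in S$. $\langle S\rangle_{\mathcal C}$ denotes the smallest $\mathcal C$-collection containing $S$. *)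

From mathcomp Require Import all_boot.
Set Implicit Arguments. Unset Strict Implicit. Unset Printing Implicit Defensive.

(* Puiseux data of a branch: multiplicity n, genus g, characteristic
   exponents beta 1 < ... < beta g  (beta 0 is unused). *)

Fixpoint e_seq (n : nat) (beta : nat -> nat) (j : nat) : nat :=
  match j with
  | 0 => n
  | j'.+1 => gcdn (e_seq n beta j') (beta j'.+1)
  end.

Definition n_seq (n : nat) (beta : nat -> nat) (j : nat) : nat :=
  e_seq n beta j.-1 %/ e_seq n beta j.

(* betabar_1 = beta_1, betabar_{j+1} = n_j betabar_j - beta_j + beta_{j+1}.
   Written as n_j*betabar_j + beta_{j+1} - beta_j, which equals the paper's
   expression since beta_j < beta_{j+1}. betabar 0 is set to n (unused). *)
Fixpoint betabar (n : nat) (beta : nat -> nat) (j : nat) : nat :=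
  match j with
  | 0 => n
  | j'.+1 =>
      match j' with
      | 0 => beta 1
      | _ => n_seq n beta j' * betabar n beta j' + beta j'.+1 - beta j'
      end
  end.

Definition puiseux_char (n g : nat) (beta : nat -> nat) : Prop :=
  1 < n /\ 0 < g /\ n < beta 1 /\
  (forall j, 1 <= j < g -> beta j < beta j.+1) /\
  (forall j, 1 <= j <= g -> e_seq n beta j < e_seq n beta j.-1) /\
  e_seq n beta g = 1.

Definition in_semigroup (n g : nat) (beta : nat -> nat) (s : nat) : Prop :=
  exists (c0 : nat) (c : nat -> nat),
    s = c0 * n + \sum_(1 <= j < g.+1) c j * betabar n beta j.

Definition is_Ccollection (n g : nat) (beta : nat -> nat) (S : nat -> Prop) : Prop :=
  [/\ (forall m, S m -> 0 < m),
      (forall m s, S m -> in_semigroup n g beta s -> S (m + s))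
    & (forall m j k, S m -> 1 <= j -> j <= k -> k <= g ->
         m <= betabar n beta j ->
         S (m + betabar n beta k - betabar n beta j))].

Definition Cgen (n g : nat) (beta : nat -> nat) (S : nat -> Prop) (m : nat) : Prop :=
  forall T : nat -> Prop, is_Ccollection n g beta T ->
    (forall x, S x -> T x) -> T m.

From mathcomp Require Import all_boot.
From mathcomp Require Import zify.

Set Implicit Arguments.
Unset Strict Implicit.
Unset Printing Implicit Defensive.

(* Since every [n_j >= 2], the generators grow geometrically:
   [2 * betabar_(j-1) < betabar_j].  Hence one jump [betabar_b - betabar_a]
   with [a < b] exceeds every [betabar_l] with [l < b], so a chain value
   [m <= betabar_j] whose last jump ends at [b] forces [betabar_b <= betabar_j]:
   the jump [betabar_k - betabar_j] can be appended to the chain.  Thus chain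
   values form a C-collection; conversely a C-collection containing [S]
   contains every chain value, by induction along the chain. *)

Lemma in_semigroupD n g (beta : nat -> nat) s t :
  in_semigroup n g beta s -> in_semigroup n g beta t -> in_semigroup n g beta (s + t).
Proof.
move=> [c0 [c ->]] [d0 [d ->]]; exists (c0 + d0), (fun j => c j + d j).
rewrite mulnDl addnACA; congr (_ + _).
by rewrite -big_split; apply: eq_bigr => j _; rewrite mulnDl.
Qed.

Section Betabar.

Variables (n g : nat) (beta : nat -> nat).
Hypothesis char_beta : puiseux_char n g beta.
Local Notation B := (betabar n beta).

Lemma n_seq_ge2 j : 1 <= j <= g -> 1 < n_seq n beta j.
Proof.
case: j => [//|j] j_le; case: char_beta => _ [_ [_ [_ [e_lt _]]]].
have e_dvd : e_seq n beta j.+1 %| e_seq n beta j by apply: dvdn_gcdl.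
rewrite /n_seq succnK; move: (e_lt j.+1 j_le) e_dvd; rewrite succnK.
move=> /[swap] /divnK {1}<-; rewrite -[X in X < _]mul1n ltn_mul2r.
by case/andP.
Qed.

Lemma betabar_double_lt j : 1 <= j < g -> 2 * B j < B j.+1.
Proof.
case: j => [//|j] j_lt; case: char_beta => _ [_ [_ [beta_lt _]]].
have := beta_lt j.+1 j_lt.
have : 2 * B j.+1 <= n_seq n beta j.+1 * B j.+1.
  by rewrite leq_mul2r n_seq_ge2 ?orbT //; lia.
have -> : B j.+2 = n_seq n beta j.+1 * B j.+1 + beta j.+2 - beta j.+1 by [].
lia.
Qed.

Lemma betabar_lt i j : 1 <= i -> i < j -> j <= g -> B i < B j.
Proof.
move=> i_ge1; elim: j => [//|j IHj]; rewrite ltnS leq_eqVlt => /orP[/eqP<- | ij] j_lt.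
  by have := @betabar_double_lt i; lia.
by have := @betabar_double_lt j; have := IHj ij; lia.
Qed.

Lemma ltn_betabar i j : 1 <= i <= g -> 1 <= j <= g -> (B i < B j) = (i < j).
Proof.
move=> /andP[i_ge1 i_le] /andP[j_ge1 j_le].
case: (ltngtP i j) => [ij|ji|->]; last exact: ltnn.
- exact: betabar_lt.
- by apply/negbTE; rewrite -leqNgt ltnW // betabar_lt.
Qed.

Lemma leq_betabar i j : 1 <= i <= g -> 1 <= j <= g -> (B i <= B j) = (i <= j).
Proof. by move=> i_in j_in; rewrite leqNgt ltn_betabar // -leqNgt. Qed.

Lemma betabar_lt_jump i j l : 1 <= i -> i < j -> j <= g -> 1 <= l < j ->
  B l < B j - B i.
Proof.
move=> i_ge1 ij j_le /andP[l_ge1 lj].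
have Bi : B i <= B j.-1 by rewrite leq_betabar; lia.
have Bl : B l <= B j.-1 by rewrite leq_betabar; lia.
have := @betabar_double_lt j.-1; rewrite prednK; lia.
Qed.

Lemma betabar_jump_le i j l : 1 <= i <= g -> 1 <= j <= g -> 1 <= l <= g ->
  B i < B j -> B j - B i <= B l -> B j <= B l.
Proof.
move=> i_in j_in l_in; rewrite ltn_betabar // leq_betabar // => ij.
by apply: contraTT; rewrite -!ltnNge => lj; apply: betabar_lt_jump; lia.
Qed.

End Betabar.

Section Chains.

Variables (n g : nat) (beta : nat -> nat) (S : nat -> Prop).
Hypotheses (char_beta : puiseux_char n g beta) (S_ge1 : forall m, S m -> 1 <= m).
Local Notation B := (betabar n beta).
Local Notation in_sg := (in_semigroup n g beta).

Definition chain_sum (r : nat) (a b : nat -> nat) : nat :=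
  \sum_(1 <= j < r.+1) (B (b j) - B (a j)).

Definition chain_value (m : nat) : Prop :=
  exists (r : nat) (a b : nat -> nat) (s k : nat),
    (s = 0 \/ in_sg s) /\
    S k /\
    (forall j, 1 <= j <= r -> (1 <= a j <= g) && (1 <= b j <= g)) /\
    (0 < r -> k <= B (a 1)) /\
    (forall j, 1 <= j <= r -> B (a j) < B (b j)) /\
    (forall j, 1 <= j < r -> B (b j) <= B (a j.+1)) /\
    m = k + chain_sum r a b + s.

Lemma chain_sum0 a b : chain_sum 0 a b = 0.
Proof. exact: big_geq. Qed.

Lemma chain_sumS r a b :
  chain_sum r.+1 a b = chain_sum r a b + (B (b r.+1) - B (a r.+1)).
Proof. exact: big_nat_recr. Qed.

Definition set_at (f : nat -> nat) (i x : nat) : nat -> nat :=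
  fun j => if j == i then x else f j.

Lemma chain_sum_set_at r a b x y :
  chain_sum r.+1 (set_at a r.+1 x) (set_at b r.+1 y) =
  chain_sum r a b + (B y - B x).
Proof.
rewrite chain_sumS /set_at eqxx; congr (_ + _).
by apply: eq_big_nat => j /andP[_ j_le]; rewrite ltn_eqF.
Qed.

Lemma chain_value_S k : S k -> chain_value k.
Proof.
move=> Sk; exists 0, id, id, 0, k.
split; first by left.
split => //; do 4 (split; first by move=> *; lia).
by rewrite chain_sum0 !addn0.
Qed.

Lemma chain_valueD m t : chain_value m -> in_sg t -> chain_value (m + t).
Proof.
move=> [r [a [b [s [k [s_sg [Sk [ab_in [k_le [ab_lt [ba_le ->]]]]]]]]]]] t_sg.
exists r, a, b, (s + t), k; do !split => //; last by rewrite addnA.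
by right; case: s_sg => [->|s_sg] //; exact: in_semigroupD.
Qed.

Lemma chain_sum_last r a b : 0 < r -> B (b r) - B (a r) <= chain_sum r a b.
Proof. by case: r => [//|r] _; rewrite chain_sumS leq_addl. Qed.

Lemma chain_value_jump m i j : chain_value m -> 1 <= i -> i <= j -> j <= g ->
  m <= B i -> chain_value (m + B j - B i).
Proof.
move=> m_chain i_ge1; rewrite leq_eqVlt => /orP[/eqP<- _ _ | ij j_le m_le].
  by rewrite addnK.
move: m_chain => [r [a [b [s [k [s_sg [Sk [ab_in [k_le [ab_lt [ba_le m_eq]]]]]]]]]]].
have last_le : 0 < r -> B (b r) <= B i.
  move=> r_gt0; have /andP[ar_in br_in] : (1 <= a r <= g) && (1 <= b r <= g).
    by apply: ab_in; lia.
  apply: (betabar_jump_le char_beta ar_in br_in); first by lia.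
    by apply: ab_lt; lia.
  by have := chain_sum_last a b r_gt0; lia.
have Bij : B i < B j by apply: (betabar_lt char_beta).
exists r.+1, (set_at a r.+1 i), (set_at b r.+1 j), s, k; rewrite /set_at.
do !split => //.
- move=> l l_in; case: eqP => [_|/eqP l_ne]; first by apply/andP; lia.
  by apply: ab_in; lia.
- case: eqP => [_|/eqP r_gt0] _; first by lia.
  by apply: k_le; lia.
- move=> l l_in; case: eqP => [_|/eqP l_ne] //; by apply: ab_lt; lia.
- move=> l /andP[l_gt0 l_lt]; rewrite (ltn_eqF l_lt); case: eqP => [[->]|/eqP l_ne].
    by apply: last_le; lia.
  by apply: ba_le; lia.
- by rewrite -/(chain_sum r.+1 _ _) chain_sum_set_at; lia.
Qed.

Lemma chain_value_Ccollection : is_Ccollection n g beta chain_value.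
Proof.
split; last exact: chain_value_jump; last exact: chain_valueD.
by move=> m [r [a [b [s [k [_ [Sk [_ [_ [_ [_ ->]]]]]]]]]]]; have := S_ge1 Sk; lia.
Qed.

Lemma Ccollection_chain_value T : is_Ccollection n g beta T ->
  (forall x, S x -> T x) -> forall m, chain_value m -> T m.
Proof.
move=> [_ T_sg T_jump] ST m.
move=> [r [a [b [s [k [s_sg [Sk [ab_in [k_le [ab_lt [ba_le ->]]]]]]]]]]].
have prefix i : i <= r ->
    T (k + chain_sum i a b) /\ (0 < i -> k + chain_sum i a b <= B (b i)).
  elim: i => [|i IHi] i_lt; first by rewrite chain_sum0 addn0; split; [exact: ST | ].
  have [Ti Ti_le] := IHi (ltnW i_lt).
  have x_le : k + chain_sum i a b <= B (a i.+1).
    case: (posnP i) => [i0|i_gt0].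
      by rewrite i0 chain_sum0 addn0; apply: k_le; lia.
    by apply: leq_trans (Ti_le i_gt0) (ba_le i _); lia.
  have /andP[a_in b_in] : (1 <= a i.+1 <= g) && (1 <= b i.+1 <= g).
    by apply: ab_in; lia.
  have Bab : B (a i.+1) < B (b i.+1) by apply: ab_lt; lia.
  have ab : a i.+1 <= b i.+1 by rewrite ltnW // -(ltn_betabar char_beta).
  rewrite chain_sumS addnA; split; last by lia.
  have -> : k + chain_sum i a b + (B (b i.+1) - B (a i.+1)) =
      k + chain_sum i a b + B (b i.+1) - B (a i.+1) by lia.
  by apply: T_jump => //; lia.
have [Tr _] := prefix r (leqnn r).
by case: s_sg => [->|s_sg]; [rewrite addn0 | exact: T_sg].
Qed.

Lemma Cgen_chain_value m : Cgen n g beta S m <-> chain_value m.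
Proof.
split; first by apply; [exact: chain_value_Ccollection | exact: chain_value_S].
by move=> m_chain T T_coll ST; exact: Ccollection_chain_value m_chain.
Qed.

End Chains.

Theorem mainTheorem6 (n g : nat) (beta : nat -> nat) (S : nat -> Prop) :
  puiseux_char n g beta ->
  (forall m, S m -> 1 <= m) ->
  forall m : nat,
    Cgen n g beta S m <->
    exists (r : nat) (a b : nat -> nat) (s k : nat),
      (s = 0 \/ in_semigroup n g beta s) /\
      S k /\
      (forall j, 1 <= j <= r -> (1 <= a j <= g) && (1 <= b j <= g)) /\
      (0 < r -> k <= betabar n beta (a 1)) /\
      (forall j, 1 <= j <= r -> betabar n beta (a j) < betabar n beta (b j)) /\
      (forall j, 1 <= j < r -> betabar n beta (b j) <= betabar n beta (a j.+1)) /\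
      m = k + \sum_(1 <= j < r.+1) (betabar n beta (b j) - betabar n beta (a j)) + s.
Proof. by move=> char_beta S_ge1 m; exact: Cgen_chain_value. Qed.
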